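(* For $c\ge 2.1$ and $\mu\in[0,1/2]$ one has $d_{\mu,c}\le\frac{3-2\mu}{5}$. In particular $2|z|^2\le 3/5$ for all $(z,w)\in\Sigma_{\mu,c}$.
   Context: Restricted three-body problem with Jacobi Hamiltonian $H(q,p)=\tfrac12|p|^2+q_1p_2-q_2p_1-\frac{1-\mu}{|q+(\mu,0)|}-\frac{\mu}{|q-(1-\mu,0)|}$ and effective potential $U(q)=-\tfrac12|q|^2-\frac{1-\mu}{|q+(\mu,0)|}-\frac{\mu}{|q-(1-\mu,0)|}$; the Hill's region at level $-c$ is $\{q:U(q)\le -c\}$. $d_{\mu,c}$ denotes the maximal distance from $(-\mu,0)$ to a point of the connected component of the Hill's region whose closure contains $(-\mu,0)$ (this maximum is attained on the $q_1$-axis at a point $(x_{\mu,c},0)$ with $x_{\mu,c}\in(-\mu,1-\mu)$, $d_{\mu,c}=x_{\mu,c}+\mu$). Levi-Civita regularization: $q+\mu=2z^2$, $p=w/\bar z$ (complex notation); $\Sigma_{\mu,c}$ is the compact component of $K_{\mu,c}^{-1}(0)$ containing $\{z=0\}$, where $K_{\mu,c}=\tfrac12|w|^2+c|z|^2-\tfrac{1-\mu}{2}+2|z|^2(z_1w_2-z_2w_1)-\mu(z_1w_2+z_2w_1)-\frac{\mu|z|^2}{|2z^2-1|}$. *)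

(* R : realType, R^2 = R * R, C^2 = (R*R)*(R*R) *)
From HB Require Import structures.
From mathcomp Require Import all_boot all_order all_algebra.
From mathcomp Require Import all_classical all_reals all_analysis.
Set Implicit Arguments. Unset Strict Implicit. Unset Printing Implicit Defensive.
Import Order.TTheory GRing.Theory Num.Theory numFieldNormedType.Exports.
Local Open Scope classical_set_scope.
Local Open Scope ring_scope.

Section RTBP.
Variable R : realType.

Definition dist2 (p q : R * R) : R :=
  Num.sqrt ((p.1 - q.1) ^+ 2 + (p.2 - q.2) ^+ 2).

Definition earth (mu : R) : R * R := (- mu, 0).
Definition moon (mu : R) : R * R := (1 - mu, 0).

Definition U_eff (mu : R) (q : R * R) : R :=
  - (q.1 ^+ 2 + q.2 ^+ 2) / 2
  - (1 - mu) / dist2 q (earth mu) - mu / dist2 q (moon mu).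

Definition hill_region (mu c : R) : set (R * R) :=
  [set q | q != earth mu /\ q != moon mu /\ U_eff mu q <= - c].

Definition earth_hill_component (mu c : R) (C : set (R * R)) : Prop :=
  exists2 q, hill_region mu c q &
    C = connected_component (hill_region mu c) q /\ closure C (earth mu).

Definition dmax (mu : R) (C : set (R * R)) : \bar R :=
  ereal_sup [set (dist2 q (earth mu))%:E | q in C].

(* Levi-Civita regularized Hamiltonian; a point of C^2 is ((z1,z2),(w1,w2))
   with z = z1 + i z2, w = w1 + i w2.
   2 z^2 - 1 = (2(z1^2 - z2^2) - 1) + i (4 z1 z2). *)
Definition abs2z2m1 (z : R * R) : R :=
  Num.sqrt ((2 * (z.1 ^+ 2 - z.2 ^+ 2) - 1) ^+ 2 + (4 * z.1 * z.2) ^+ 2).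

Definition K_LC (mu c : R) (x : (R * R) * (R * R)) : R :=
  let z1 := x.1.1 in let z2 := x.1.2 in let w1 := x.2.1 in let w2 := x.2.2 in
  let nz := z1 ^+ 2 + z2 ^+ 2 in
  (w1 ^+ 2 + w2 ^+ 2) / 2 + c * nz - (1 - mu) / 2
  + 2 * nz * (z1 * w2 - z2 * w1) - mu * (z1 * w2 + z2 * w1)
  - mu * nz / abs2z2m1 x.1.

(* zero level set of K (on its domain 2 z^2 <> 1) *)
Definition K_level0 (mu c : R) : set ((R * R) * (R * R)) :=
  [set x | abs2z2m1 x.1 != 0 /\ K_LC mu c x = 0].

(* Sigma_{mu,c}: the component of K^{-1}(0) containing {z = 0}; the points
   of K^{-1}(0) with z = 0 form the circle |w|^2 = 1 - mu, so Sigma is the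
   connected component of any such point. *)
Definition Sigma (mu c : R) (w0 : R * R) : set ((R * R) * (R * R)) :=
  connected_component (K_level0 mu c) ((0, 0), w0).

End RTBP.

(* Put r = (3 - 2 mu) / 5. At distance r from the Earth and D from the Moon,
   U = -(r^2 + mu D^2 - mu (1 + r^2) + mu^2) / 2 - (1 - mu) / r - mu / D is
   concave in D, so on the circle |q + mu| = r, where 1 - r <= D <= 1 + r, it
   exceeds its smaller endpoint value, and both endpoint values exceed -2.1 >= -c.
   Hence the circle misses the Hill's region and, by connectedness, the Earth
   component lies inside it. In Levi-Civita variables this circle is
   2 |z|^2 = r, where K = |z|^2 (H + c) is a square plus |z|^2 (U + c) > 0; so
   Sigma, which is connected and meets z = 0, stays in 2 |z|^2 < r <= 3/5. *)

From HB Require Import structures.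
From mathcomp Require Import all_boot all_order all_algebra.
From mathcomp Require Import all_classical all_reals all_analysis.
From mathcomp Require Import ring lra.
Set Implicit Arguments. Unset Strict Implicit. Unset Printing Implicit Defensive.
Import Order.TTheory GRing.Theory Num.Theory numFieldNormedType.Exports.
Local Open Scope classical_set_scope.
Local Open Scope ring_scope.

Section BipolarPotential.
Variable R : realFieldType.
Implicit Types mu r D k : R.

(* [U] at a point at distance [r] from the Earth and [D] from the Moon. *)
Definition U_bipolar mu r D : R :=
  - (r ^+ 2 - mu * (1 + r ^+ 2 - D ^+ 2) + mu ^+ 2) / 2 - (1 - mu) / r - mu / D.

Lemma U_bipolar_gt_endpoints mu r D k : 0 <= mu -> 0 < r < 1 ->
  1 - r <= D <= 1 + r ->
  k < U_bipolar mu r (1 - r) -> k < U_bipolar mu r (1 + r) ->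
  k < U_bipolar mu r D.
Proof.
move=> mu0 /andP[r0 r1] /andP[Dlo Dhi] klo khi.
have D0 : 0 < D by lra.
have concave : 2 * r * U_bipolar mu r D =
    (1 + r - D) * U_bipolar mu r (1 - r) + (D - (1 - r)) * U_bipolar mu r (1 + r)
    + mu * (D - (1 - r)) * (1 + r - D) * (2 * r) * (1 / 2 + 1 / ((1 - r) * (1 + r) * D)).
  by rewrite /U_bipolar; field; rewrite !gt_eqF //; lra.
have gap_ge0 : 0 <= mu * (D - (1 - r)) * (1 + r - D) * (2 * r) *
                    (1 / 2 + 1 / ((1 - r) * (1 + r) * D)).
  have inv_ge0 : 0 <= 1 / ((1 - r) * (1 + r) * D) by rewrite divr_ge0 ?mulr_ge0 //; lra.
  by rewrite !mulr_ge0 //; lra.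
have interp : 2 * r * k < (1 + r - D) * U_bipolar mu r (1 - r)
                        + (D - (1 - r)) * U_bipolar mu r (1 + r).
  have [D1|D1] := lerP D 1; nra.
by rewrite -(ltr_pM2l (_ : 0 < 2 * r)) ?concave; lra.
Qed.

Lemma U_bipolar_inner_gt mu : 0 <= mu <= 1 / 2 ->
  - (21 / 10) < U_bipolar mu ((3 - 2 * mu) / 5) (1 - (3 - 2 * mu) / 5).
Proof.
move=> /andP[mu0 mu1].
have num_gt0 : 0 < (105 - (3 - 7 * mu) ^+ 2) * (3 - 2 * mu) * (2 + 2 * mu)
                   - 250 * (1 - mu) * (2 + 2 * mu) - 250 * mu * (3 - 2 * mu) by nra.
rewrite -subr_gt0 opprK.
have -> : U_bipolar mu ((3 - 2 * mu) / 5) (1 - (3 - 2 * mu) / 5) + 21 / 10 =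
    ((105 - (3 - 7 * mu) ^+ 2) * (3 - 2 * mu) * (2 + 2 * mu)
     - 250 * (1 - mu) * (2 + 2 * mu) - 250 * mu * (3 - 2 * mu))
    / (50 * (3 - 2 * mu) * (2 + 2 * mu)).
  by rewrite /U_bipolar; field; rewrite !gt_eqF //; lra.
by rewrite divr_gt0 // !mulr_gt0 //; lra.
Qed.

Lemma U_bipolar_outer_gt mu : 0 <= mu <= 1 / 2 ->
  - (21 / 10) < U_bipolar mu ((3 - 2 * mu) / 5) (1 + (3 - 2 * mu) / 5).
Proof.
move=> /andP[mu0 mu1].
have num_gt0 : 0 < (105 - 9 * (1 + mu) ^+ 2) * (3 - 2 * mu) * (8 - 2 * mu)
                   - 250 * (1 - mu) * (8 - 2 * mu) - 250 * mu * (3 - 2 * mu) by nra.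
rewrite -subr_gt0 opprK.
have -> : U_bipolar mu ((3 - 2 * mu) / 5) (1 + (3 - 2 * mu) / 5) + 21 / 10 =
    ((105 - 9 * (1 + mu) ^+ 2) * (3 - 2 * mu) * (8 - 2 * mu)
     - 250 * (1 - mu) * (8 - 2 * mu) - 250 * mu * (3 - 2 * mu))
    / (50 * (3 - 2 * mu) * (8 - 2 * mu)).
  by rewrite /U_bipolar; field; rewrite !gt_eqF //; lra.
by rewrite divr_gt0 // !mulr_gt0 //; lra.
Qed.

Lemma U_bipolar_gt_on_circle mu D : 0 <= mu <= 1 / 2 ->
  1 - (3 - 2 * mu) / 5 <= D <= 1 + (3 - 2 * mu) / 5 ->
  - (21 / 10) < U_bipolar mu ((3 - 2 * mu) / 5) D.
Proof.
move=> mu_bd D_bd; have /andP[mu0 mu1] := mu_bd.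
apply: U_bipolar_gt_endpoints => //.
- by apply/andP; split; lra.
- exact: U_bipolar_inner_gt.
- exact: U_bipolar_outer_gt.
Qed.

Lemma dist_unit_bounds r v1 v2 D : 0 < r -> 0 <= D ->
  v1 ^+ 2 + v2 ^+ 2 = r ^+ 2 -> D ^+ 2 = (v1 - 1) ^+ 2 + v2 ^+ 2 ->
  1 - r <= D <= 1 + r.
Proof.
move=> r0 D0 v_r D_v.
have v1_sq : v1 ^+ 2 <= r ^+ 2 by rewrite -v_r lerDl sqr_ge0.
have v1lo : - r <= v1 by nra.
have v1hi : v1 <= r by nra.
by apply/andP; split; nra.
Qed.

End BipolarPotential.

Lemma U_effE (R : realType) (mu : R) (q : R * R) :
  U_eff mu q = U_bipolar mu (dist2 q (earth mu)) (dist2 q (moon mu)).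
Proof.
rewrite /U_eff /U_bipolar /dist2 /= !sqr_sqrtr ?addr_ge0 ?sqr_ge0 //.
congr (_ - _ - _); ring.
Qed.

(* [K = |z|^2 (H + c)] with [H = |p + J q|^2 / 2 + U(q)] and [q + mu = 2 z^2]. *)
Lemma K_LC_completed_square (R : realType) (mu c z1 z2 w1 w2 : R) :
  let n := z1 ^+ 2 + z2 ^+ 2 in let D := abs2z2m1 (z1, z2) in
  n != 0 -> D != 0 ->
  K_LC mu c ((z1, z2), (w1, w2)) =
    ((w1 - (2 * n + mu) * z2) ^+ 2 + (w2 + (2 * n - mu) * z1) ^+ 2) / 2
    + n * (c + U_bipolar mu (2 * n) D).
Proof.
move=> n D n0 D0.
have D_sq : D ^+ 2 = (2 * (z1 ^+ 2 - z2 ^+ 2) - 1) ^+ 2 + (4 * z1 * z2) ^+ 2.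
  by rewrite /D /abs2z2m1 sqr_sqrtr ?addr_ge0 ?sqr_ge0.
rewrite /K_LC /U_bipolar /= -/n -/D D_sq /n; field.
by rewrite -/n n0 -/D D0.
Qed.

Lemma continuous_sqr_add (R : realType) (T : topologicalType) (f g : T -> R) :
  continuous f -> continuous g -> continuous (fun x => f x ^+ 2 + g x ^+ 2).
Proof.
move=> cf cg x.
have sqr (h : T -> R) : continuous h -> continuous (fun y => h y ^+ 2).
  move=> ch y /=; under eq_fun do rewrite expr2.
  exact: continuousM (ch y) (ch y).
exact: continuousD (sqr f cf x) (sqr g cg x).
Qed.

Lemma connected_lt (R : realType) (T : topologicalType) (A : set T) (f : T -> R) r :
  connected A -> continuous f -> (exists2 a, A a & f a < r) ->
  (forall a, A a -> f a != r) -> forall a, A a -> f a < r.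
Proof.
move=> A_conn cf [a0 Aa0 fa0] f_neq.
suff -> : A = [set a | A a /\ f a < r] by move=> a [].
apply/esym/A_conn; first by exists a0.
- exists (f @^-1` [set x | x < r]); last by [].
  exact: (continuousP f).1 _ (@open_lt _ r).
- exists (f @^-1` [set x | x <= r]).
    exact: (continuous_closedP f).1 _ (@closed_le _ r).
  apply/seteqP; split => a /= [Aa fa]; split => //; first exact: ltW.
  by rewrite lt_neqAle f_neq.
Qed.

Section Confinement.
Variables (R : realType) (mu c : R).
Hypotheses (c_ge : 21 / 10 <= c) (mu_bd : 0 <= mu <= 1 / 2).

Lemma U_eff_gt_on_circle q : (q.1 + mu) ^+ 2 + q.2 ^+ 2 = ((3 - 2 * mu) / 5) ^+ 2 ->
  - c < U_eff mu q.
Proof.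
have /andP[mu0 mu1] := mu_bd; set r := (3 - 2 * mu) / 5 => q_r.
have r0 : 0 < r by rewrite /r; lra.
have dist_earth : dist2 q (earth mu) = r.
  by rewrite /dist2 /= opprK subr0 q_r sqrtr_sqr ger0_norm // ltW.
have dist_moon : dist2 q (moon mu) ^+ 2 = (q.1 + mu - 1) ^+ 2 + q.2 ^+ 2.
  rewrite /dist2 /= sqr_sqrtr ?addr_ge0 ?sqr_ge0 //; congr (_ ^+ 2 + _); ring.
have := dist_unit_bounds r0 (sqrtr_ge0 _) q_r dist_moon.
move=> /(U_bipolar_gt_on_circle mu_bd); rewrite -/r -dist_earth -U_effE.
by apply: le_lt_trans; rewrite lerN2.
Qed.

Lemma K_LC_neq0_on_circle z1 z2 w1 w2 :
  2 * (z1 ^+ 2 + z2 ^+ 2) = (3 - 2 * mu) / 5 -> abs2z2m1 (z1, z2) != 0 ->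
  K_LC mu c ((z1, z2), (w1, w2)) != 0.
Proof.
have /andP[mu0 mu1] := mu_bd.
set n := z1 ^+ 2 + z2 ^+ 2; set D := abs2z2m1 (z1, z2) => n_r D0.
have n0 : 0 < n by lra.
have z_sq : (2 * (z1 ^+ 2 - z2 ^+ 2)) ^+ 2 + (4 * z1 * z2) ^+ 2 = (2 * n) ^+ 2.
  by rewrite /n; ring.
have D_sq : D ^+ 2 = (2 * (z1 ^+ 2 - z2 ^+ 2) - 1) ^+ 2 + (4 * z1 * z2) ^+ 2.
  by rewrite /D /abs2z2m1 sqr_sqrtr ?addr_ge0 ?sqr_ge0.
have D_bd : 1 - 2 * n <= D <= 1 + 2 * n.
  by apply: (dist_unit_bounds _ (sqrtr_ge0 _) z_sq D_sq); lra.
have U_gt : - (21 / 10) < U_bipolar mu (2 * n) D.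
  by rewrite n_r; apply: U_bipolar_gt_on_circle; rewrite -?n_r.
rewrite K_LC_completed_square ?(gt_eqF n0) // -/n -/D.
have kin_ge0 : 0 <= ((w1 - (2 * n + mu) * z2) ^+ 2 + (w2 + (2 * n - mu) * z1) ^+ 2) / 2.
  by rewrite divr_ge0 ?addr_ge0 ?sqr_ge0.
have pot_gt0 : 0 < n * (c + U_bipolar mu (2 * n) D).
  by rewrite mulr_gt0 // -ltrBlDl sub0r (le_lt_trans _ U_gt) // lerN2.
by rewrite gt_eqF // ltr_pwDr.
Qed.

Lemma earth_hill_component_dmax_le C : earth_hill_component mu c C ->
  (dmax mu C <= ((3 - 2 * mu) / 5)%:E)%E.
Proof.
move=> [q0 _ [C_def earth_cl]]; have /andP[mu0 mu1] := mu_bd.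
set r := (3 - 2 * mu) / 5; have r0 : 0 < r by rewrite /r; lra.
pose f (q : R * R) := (q.1 + mu) ^+ 2 + q.2 ^+ 2.
have f_cont : continuous f.
  apply: continuous_sqr_add => q; last exact: cvg_snd.
  by apply: continuousD; [exact: cvg_fst | exact: cvg_cst].
have near_earth : exists2 q, C q & f q < r ^+ 2.
  have [q [Cq fq]] : C `&` (f @^-1` [set x | x < r ^+ 2]) !=set0.
    apply: earth_cl; apply: open_nbhs_nbhs; split.
      exact: (continuousP f).1 _ (@open_lt _ _).
    by rewrite /f /= addNr expr0n /= addr0 exprn_gt0.
  by exists q.
have off_circle q : C q -> f q != r ^+ 2.
  have : C `<=` hill_region mu c by rewrite C_def; exact: connected_component_sub.
  move=> /[apply] -[_ [_ U_le]]; apply/eqP => /U_eff_gt_on_circle.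
  by rewrite ltNge U_le.
have C_conn : connected C by rewrite C_def; exact: component_connected.
apply: ge_ereal_sup => _ [q Cq <-]; rewrite lee_fin.
have -> : dist2 q (earth mu) = Num.sqrt (f q) by rewrite /dist2 /f /= opprK subr0.
rewrite -(ger0_norm (ltW r0)) -sqrtr_sqr ler_sqrt ?sqr_ge0 //.
exact/ltW/(connected_lt C_conn f_cont near_earth off_circle).
Qed.

Lemma Sigma_sqr_norm_le w0 : K_level0 mu c ((0, 0), w0) ->
  forall x, Sigma mu c w0 x -> 2 * (x.1.1 ^+ 2 + x.1.2 ^+ 2) <= 3 / 5.
Proof.
move=> w0_lev x Sx; have /andP[mu0 mu1] := mu_bd.
pose g (y : (R * R) * (R * R)) := y.1.1 ^+ 2 + y.1.2 ^+ 2.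
have g_cont : continuous g.
  by apply: continuous_sqr_add => y; apply: continuous_comp; exact: cvg_fst || exact: cvg_snd.
have at_origin : exists2 y, Sigma mu c w0 y & g y < (3 - 2 * mu) / 5 / 2.
  exists ((0, 0), w0); first exact: connected_component_refl w0_lev.
  by rewrite /g /= expr0n /= addr0; lra.
have off_circle y : Sigma mu c w0 y -> g y != (3 - 2 * mu) / 5 / 2.
  have : Sigma mu c w0 `<=` K_level0 mu c by exact: connected_component_sub.
  case: y => [[z1 z2] [w1 w2]] /[apply] -[D0 K0]; apply/eqP => g_r.
  have : K_LC mu c ((z1, z2), (w1, w2)) != 0.
    by apply: K_LC_neq0_on_circle D0 => //; rewrite /g /= in g_r; rewrite g_r; field.
  by rewrite K0 eqxx.
have Sigma_conn : connected (Sigma mu c w0) by exact: component_connected.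
have := connected_lt Sigma_conn g_cont at_origin off_circle Sx.
by rewrite /g; lra.
Qed.

End Confinement.

Theorem lemma4p1 (R : realType) (mu c : R) :
  21 / 10 <= c -> 0 <= mu -> mu <= 1 / 2 ->
  (forall C : set (R * R), earth_hill_component mu c C ->
     (dmax mu C <= ((3 - 2 * mu) / 5)%:E)%E) /\
  (forall w0 : R * R, K_level0 mu c ((0, 0), w0) ->
     forall x, Sigma mu c w0 x ->
       2 * (x.1.1 ^+ 2 + x.1.2 ^+ 2) <= 3 / 5).
Proof.
move=> c_ge mu0 mu1; have mu_bd : 0 <= mu <= 1 / 2 by rewrite mu0.
split; [exact: earth_hill_component_dmax_le | exact: Sigma_sqr_norm_le].
Qed.
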